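(* Let $S\subset\mathbb R^2$ be a finite set of $n>4$ points, none of which lies at the center of SED$(S)$. If $S$ is Pre-regular, then every internal angle of the convex hull of $S$ is strictly greater than $\pi(n-3)/n$.
   Context: SED$(S)$ is the smallest closed disk containing $S$. $S$ is \emph{Pre-regular} if there is a regular $n$-gon $P$ (the supporting polygon) such that for every pair of adjacent edges of $P$, one of the two edges contains exactly two points of $S$ (possibly at its endpoints) and the relative interior of the other edge contains no point of $S$. *)

From Stdlib Require Import Reals List.
Import ListNotations.
Open Scope R_scope.

Definition pt := (R * R)%type.

Definition padd (a b : pt) : pt := (fst a + fst b, snd a + snd b).
Definition psub (a b : pt) : pt := (fst a - fst b, snd a - snd b).
Definition pscale (t : R) (a : pt) : pt := (t * fst a, t * snd a).
Definition dot (a b : pt) : R := fst a * fst b + snd a * snd b.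
Definition cross (a b : pt) : R := fst a * snd b - snd a * fst b.
Definition norm (a : pt) : R := sqrt (dot a a).
Definition dist (a b : pt) : R := norm (psub a b).

Definition disk_contains (S : list pt) (c : pt) (r : R) : Prop :=
  forall p, In p S -> dist p c <= r.

Definition is_SED (S : list pt) (c : pt) (r : R) : Prop :=
  disk_contains S c r /\
  (forall c' r', disk_contains S c' r' -> r <= r').

Definition on_segment (p a b : pt) : Prop :=
  exists t, 0 <= t <= 1 /\ p = padd a (pscale t (psub b a)).

Definition in_rel_interior (p a b : pt) : Prop :=
  exists t, 0 < t < 1 /\ p = padd a (pscale t (psub b a)).

Definition seg_has_exactly_two (S : list pt) (a b : pt) : Prop :=
  exists p q, p <> q /\ In p S /\ In q S /\
    on_segment p a b /\ on_segment q a b /\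
    (forall x, In x S -> on_segment x a b -> x = p \/ x = q).

Definition seg_interior_empty (S : list pt) (a b : pt) : Prop :=
  forall x, In x S -> ~ in_rel_interior x a b.

Definition reg_vertex (n : nat) (c : pt) (rho theta : R) (k : nat) : pt :=
  (fst c + rho * cos (theta + 2 * PI * INR k / INR n),
   snd c + rho * sin (theta + 2 * PI * INR k / INR n)).

(* S is Pre-regular with a supporting regular n-gon (n = |S|):
   edge k is [v_k, v_{k+1}] (indices mod n); for every pair of adjacent
   edges (k, k+1), one edge contains exactly two points of S and the
   relative interior of the other contains no point of S. *)
Definition pre_regular (n : nat) (S : list pt) : Prop :=
  exists (c : pt) (rho theta : R), 0 < rho /\
    forall k, (k < n)%nat ->
      let v0 := reg_vertex n c rho theta k in
      let v1 := reg_vertex n c rho theta (k + 1) in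
      let v2 := reg_vertex n c rho theta (k + 2) in
      (seg_has_exactly_two S v0 v1 /\ seg_interior_empty S v1 v2) \/
      (seg_has_exactly_two S v1 v2 /\ seg_interior_empty S v0 v1).

Fixpoint wsum (ws : list R) (L : list pt) : pt :=
  match ws, L with
  | w :: ws', p :: L' => padd (pscale w p) (wsum ws' L')
  | _, _ => (0, 0)
  end.

Definition in_conv (L : list pt) (x : pt) : Prop :=
  exists ws : list R, length ws = length L /\
    Forall (fun w => 0 <= w) ws /\ fold_right Rplus 0 ws = 1 /\
    x = wsum ws L.

Definition in_conv_set (P : pt -> Prop) (x : pt) : Prop :=
  exists L : list pt, (forall p, In p L -> P p) /\ in_conv L x.

Definition hull_vertex (S : list pt) (v : pt) : Prop :=
  In v S /\ ~ in_conv_set (fun p => In p S /\ p <> v) v.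

(* u and v are adjacent vertices of the convex polygon conv(S), i.e. [u,v] is
   an edge of conv(S): both are hull vertices, u <> v, and the line uv
   supports S (all of S lies in one closed half-plane bounded by it). *)
Definition hull_adjacent (S : list pt) (u v : pt) : Prop :=
  hull_vertex S u /\ hull_vertex S v /\ u <> v /\
  ((forall p, In p S -> 0 <= cross (psub v u) (psub p u)) \/
   (forall p, In p S -> cross (psub v u) (psub p u) <= 0)).

Definition angle (u v w : pt) : R :=
  acos (dot (psub u v) (psub w v) / (norm (psub u v) * norm (psub w v))).

(* Put a := PI / n.  Charging to each edge of the supporting n-gon a point of S that lies
   on an edge carrying exactly two points of S, one finds n distinct such points, so every
   point v of S, in particular every hull vertex, lies on such an edge, together with a
   second point p.  Walking from v away from p, pre-regularity forces one of the next two
   edges to carry two points of S, and one of them, b, is not the vertex where v's edge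
   ends; in the regular n-gon the angle p v b then exceeds PI - 3 a.  Finally S lies in the
   cone of the hull angle at v, so that angle is at least the angle p v b. *)

From Stdlib Require Import Reals List Lra Lia Psatz Classical ClassicalEpsilon.
Import ListNotations.
Open Scope R_scope.

Lemma sqr_le_sqr_nonneg (x y : R) : 0 <= y -> x * x <= y * y -> x <= y.
Proof. intros Hy Hxy. apply Rsqr_incr_0_var; unfold Rsqr; lra. Qed.

Lemma dot_self_nonneg (X : pt) : 0 <= dot X X.
Proof. destruct X; unfold dot; simpl; nra. Qed.

Lemma dot_self_pos (X : pt) : X <> (0, 0) -> 0 < dot X X.
Proof.
  destruct X as [x y]; unfold dot; simpl. intros H.
  pose proof (Rle_0_sqr x). pose proof (Rle_0_sqr y).
  destruct (Req_dec x 0); [destruct (Req_dec y 0); [subst; congruence|]|].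
  - pose proof (Rlt_0_sqr y). unfold Rsqr in *. lra.
  - pose proof (Rlt_0_sqr x). unfold Rsqr in *. lra.
Qed.

Lemma norm_mult (X Y : pt) :
  norm X * norm Y = sqrt (dot X Y * dot X Y + cross X Y * cross X Y).
Proof.
  unfold norm. rewrite <- sqrt_mult by apply dot_self_nonneg.
  f_equal. destruct X, Y; unfold dot, cross; simpl; ring.
Qed.

Lemma psub_neq0 (x y : pt) : x <> y -> psub x y <> (0, 0).
Proof. intros H E. apply H. destruct x, y; injection E; intros; f_equal; lra. Qed.

Lemma cross_antisym (X Y : pt) : cross X Y = - cross Y X.
Proof. destruct X, Y; unfold cross; simpl; ring. Qed.

Lemma dot_comm (X Y : pt) : dot X Y = dot Y X.
Proof. unfold dot; ring. Qed.

(* AM-GM: [a c uu + b d ww >= 2 sqrt (a c uu b d ww) >= 2 b c |k|]. *)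
Lemma am_gm_cross_term (a b c d uu ww k : R) :
  0 <= a -> 0 <= b -> 0 <= c -> 0 <= d -> 0 <= uu -> 0 <= ww ->
  k * k <= uu * ww -> b * c <= a * d ->
  0 <= a * c * uu + b * d * ww + 2 * (b * c) * k.
Proof.
  intros Ha Hb Hc Hd Hu Hw Hk Hbc.
  assert (Hbc0 : 0 <= b * c) by nra.
  assert (Hsum : 0 <= a * c * uu + b * d * ww).
  { assert (0 <= a * c * uu) by (apply Rmult_le_pos; nra).
    assert (0 <= b * d * ww) by (apply Rmult_le_pos; nra). lra. }
  destruct (Rle_dec 0 k); [nra|].
  assert (Hbcd : (b * c) * (b * c) <= (a * c) * (b * d)).
  { replace ((a * c) * (b * d)) with ((b * c) * (a * d)) by ring.
    apply Rmult_le_compat_l; lra. }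
  assert (Hprod : (b * c) * (b * c) * (k * k) <= (a * c * uu) * (b * d * ww)).
  { replace ((a * c * uu) * (b * d * ww)) with ((a * c) * (b * d) * (uu * ww)) by ring.
    apply Rmult_le_compat; nra. }
  assert (2 * (b * c) * - k <= a * c * uu + b * d * ww).
  { apply sqr_le_sqr_nonneg; [lra|].
    pose proof (Rle_0_sqr (a * c * uu - b * d * ww)). unfold Rsqr in *. nra. }
  lra.
Qed.

Lemma cone_cross_bound (a b c d uu ww k : R) :
  0 <= a -> 0 <= b -> 0 <= c -> 0 <= d -> 0 <= uu -> 0 <= ww -> k * k <= uu * ww ->
  k * Rabs (a * d - b * c) <= a * c * uu + b * d * ww + (a * d + b * c) * k.
Proof.
  intros Ha Hb Hc Hd Hu Hw Hk.
  destruct (Rle_dec (b * c) (a * d)).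
  - rewrite Rabs_right by lra.
    pose proof (am_gm_cross_term a b c d uu ww k Ha Hb Hc Hd Hu Hw Hk r). nra.
  - rewrite Rabs_left by lra.
    pose proof (am_gm_cross_term c d a b uu ww k Hc Hd Ha Hb Hu Hw Hk ltac:(lra)). nra.
Qed.

(* The vectors [(P, C)] and [(k, kap)] (with [kap > 0]) make angles with the x-axis, and
   [k |C| <= kap P] says the first angle is the smaller one; compare their cosines. *)
Lemma cos_le_of_cot_le (k kap P C : R) : 0 < kap -> k * Rabs C <= kap * P ->
  k * sqrt (P * P + C * C) <= P * sqrt (k * k + kap * kap).
Proof.
  intros Hkap H.
  set (A := sqrt (P * P + C * C)). set (B := sqrt (k * k + kap * kap)).
  assert (HA : A * A = P * P + C * C) by (apply sqrt_sqrt; nra).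
  assert (HB : B * B = k * k + kap * kap) by (apply sqrt_sqrt; nra).
  assert (A0 : 0 <= A) by apply sqrt_pos. assert (B0 : 0 <= B) by apply sqrt_pos.
  pose proof (Rabs_pos C) as HC.
  assert (EC : Rabs C * Rabs C = C * C) by (rewrite <- Rabs_mult; apply Rabs_right; nra).
  destruct (Rle_dec 0 k).
  - assert (0 <= P) by nra.
    apply sqr_le_sqr_nonneg; [nra|].
    assert (k * k * (C * C) <= P * P * (kap * kap)).
    { rewrite <- EC. assert (0 <= k * Rabs C) by nra.
      replace (k * k * (Rabs C * Rabs C)) with ((k * Rabs C) * (k * Rabs C)) by ring.
      replace (P * P * (kap * kap)) with ((kap * P) * (kap * P)) by ring. nra. }
    replace (k * A * (k * A)) with (k * k * (A * A)) by ring.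
    replace (P * B * (P * B)) with (P * P * (B * B)) by ring.
    rewrite HA, HB. nra.
  - destruct (Rle_dec 0 P); [nra|].
    assert (P * P * (kap * kap) <= k * k * (C * C)).
    { rewrite <- EC. assert (0 <= - (kap * P)) by nra.
      replace (k * k * (Rabs C * Rabs C)) with ((- k * Rabs C) * (- k * Rabs C)) by ring.
      replace (P * P * (kap * kap)) with ((- (kap * P)) * (- (kap * P))) by ring. nra. }
    assert (- P * B <= - k * A).
    { apply sqr_le_sqr_nonneg; [nra|].
      replace (- k * A * (- k * A)) with (k * k * (A * A)) by ring.
      replace (- P * B * (- P * B)) with (P * P * (B * B)) by ring.
      rewrite HA, HB. nra. }
    lra.
Qed.

(* Any two vectors of the closed cone spanned by [U] and [W] make an angle no larger than
   the angle between [U] and [W]. *)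
Lemma cone_angle_le (U W X Y : pt) : 0 < cross U W ->
  0 <= cross U X -> 0 <= cross X W -> 0 <= cross U Y -> 0 <= cross Y W ->
  dot U W * (norm X * norm Y) <= dot X Y * (norm U * norm W).
Proof.
  intros Hk Ha Hb Hc Hd.
  set (kap := cross U W) in *.
  (* coordinates of [X] and [Y] in the basis [(U, W)], scaled by [kap] *)
  assert (Edot : kap * kap * dot X Y = cross X W * cross Y W * dot U U
     + cross U X * cross U Y * dot W W
     + (cross X W * cross U Y + cross U X * cross Y W) * dot U W).
  { unfold kap; destruct U, W, X, Y; unfold dot, cross; simpl; ring. }
  assert (Ecross : kap * cross X Y = cross X W * cross U Y - cross U X * cross Y W).
  { unfold kap; destruct U, W, X, Y; unfold dot, cross; simpl; ring. }
  assert (Hcs : dot U W * dot U W <= dot U U * dot W W).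
  { assert (dot U U * dot W W = dot U W * dot U W + kap * kap)
      by (unfold kap; destruct U, W; unfold dot, cross; simpl; ring). nra. }
  pose proof (cone_cross_bound _ _ _ _ _ _ _ Hb Ha Hd Hc
                (dot_self_nonneg U) (dot_self_nonneg W) Hcs) as B.
  rewrite <- Edot, <- Ecross, Rabs_mult, (Rabs_right kap) in B by lra.
  assert (K : dot U W * Rabs (cross X Y) <= kap * dot X Y).
  { apply Rmult_le_reg_l with kap; [lra|]. nra. }
  rewrite (norm_mult X Y), (norm_mult U W).
  replace (cross U W) with kap by reflexivity.
  exact (cos_le_of_cot_le _ _ _ _ Hk K).
Qed.

Lemma hull_vertex_not_between (S : list pt) (z x y : pt) (l : R) :
  hull_vertex S z -> In x S -> In y S -> x <> z -> y <> z -> 0 <= l <= 1 ->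
  z = padd (pscale l x) (pscale (1 - l) y) -> False.
Proof.
  intros [_ Hz] Hx Hy Hxz Hyz Hl E. apply Hz.
  exists [x; y]. split.
  - intros p [<-|[<-|[]]]; auto.
  - exists [l; 1 - l]. split; [reflexivity|]. split; [|split].
    + constructor; [lra|constructor; [lra|constructor]].
    + simpl; lra.
    + rewrite E. destruct x, y; simpl; unfold padd, pscale; simpl. f_equal; ring.
Qed.

Lemma cross_eq0_parallel (U W : pt) : W <> (0, 0) -> cross U W = 0 ->
  U = pscale ((dot U W) / (dot W W)) W.
Proof.
  intros HW Hc. pose proof (dot_self_pos W HW).
  destruct U as [u1 u2], W as [w1 w2]; unfold cross, dot, pscale in *; simpl in *.
  f_equal; field_simplify_eq; try lra.
  - transitivity (u1 * w1 ^ 2 + w1 * u2 * w2 + w2 * (u1 * w2 - u2 * w1)); [ring|].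
    rewrite Hc; ring.
  - transitivity (u2 * w2 ^ 2 + u1 * w1 * w2 - w1 * (u1 * w2 - u2 * w1)); [ring|].
    rewrite Hc; ring.
Qed.

Lemma hull_vertices_not_collinear (S : list pt) (u v w : pt) :
  hull_vertex S u -> hull_vertex S v -> hull_vertex S w -> u <> v -> w <> v -> u <> w ->
  cross (psub u v) (psub w v) <> 0.
Proof.
  intros Hu Hv Hw Huv Hwv Huw Hc.
  pose proof (cross_eq0_parallel _ _ (psub_neq0 w v Hwv) Hc) as E.
  set (t := dot (psub u v) (psub w v) / dot (psub w v) (psub w v)) in E.
  destruct u as [u1 u2], v as [v1 v2], w as [w1 w2].
  unfold psub, pscale in E; simpl in E; injection E as E1 E2.
  destruct (Rtotal_order t 0) as [Ht|[Ht|Ht]]; [|apply Huv; f_equal; nra|].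
  - apply (hull_vertex_not_between S (v1, v2) (u1, u2) (w1, w2) (1 / (1 - t)));
      try apply Hu; try apply Hv; try apply Hw; auto.
    + split; [apply Rlt_le, Rdiv_lt_0_compat; lra|].
      apply Rmult_le_reg_l with (1 - t); [lra|]. field_simplify; lra.
    + unfold padd, pscale; simpl. f_equal; field_simplify_eq; nra.
  - destruct (Rle_dec t 1).
    + apply (hull_vertex_not_between S (u1, u2) (v1, v2) (w1, w2) (1 - t));
        try apply Hu; try apply Hv; try apply Hw; auto; [lra|].
      unfold padd, pscale; simpl. f_equal; nra.
    + apply (hull_vertex_not_between S (w1, w2) (v1, v2) (u1, u2) (1 - 1 / t));
        try apply Hu; try apply Hv; try apply Hw; auto.
      * assert (0 < 1 / t < 1).
        { split; [apply Rdiv_lt_0_compat; lra|].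
          apply Rmult_lt_reg_l with t; [lra|]. field_simplify; lra. }
        lra.
      * unfold padd, pscale; simpl. f_equal; field_simplify_eq; nra.
Qed.

Lemma hull_adjacent_sym (S : list pt) (u v : pt) : hull_adjacent S u v -> hull_adjacent S v u.
Proof.
  assert (E : forall p, cross (psub u v) (psub p v) = - cross (psub v u) (psub p u))
    by (intros; destruct u, v, p; unfold cross, psub; simpl; ring).
  intros [Hu [Hv [Huv H]]]. split; [auto|split; [auto|split; [auto|]]].
  destruct H as [H|H].
  - right. intros p Hp. rewrite E. specialize (H p Hp). lra.
  - left. intros p Hp. rewrite E. specialize (H p Hp). lra.
Qed.

Lemma supporting_line_side (S : list pt) (v x y : pt) :
  hull_adjacent S v x -> In y S -> 0 < cross (psub x v) (psub y v) ->
  forall p, In p S -> 0 <= cross (psub x v) (psub p v).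
Proof.
  intros [_ [_ [_ [H|H]]]] Hy Hpos; auto.
  specialize (H y Hy). lra.
Qed.

Lemma hull_angle_le_pos (S : list pt) (u v w x y : pt) :
  hull_adjacent S u v -> hull_adjacent S v w -> 0 < cross (psub u v) (psub w v) ->
  In x S -> In y S ->
  dot (psub u v) (psub w v) * (norm (psub x v) * norm (psub y v))
   <= dot (psub x v) (psub y v) * (norm (psub u v) * norm (psub w v)).
Proof.
  intros Huv Hvw Hk Hx Hy.
  assert (Hw : In w S) by apply Hvw. assert (Hu : In u S) by apply Huv.
  assert (Side_u : forall p, In p S -> 0 <= cross (psub u v) (psub p v))
    by exact (supporting_line_side S v u w (hull_adjacent_sym S u v Huv) Hw Hk).
  assert (Side_w : forall p, In p S -> 0 <= cross (psub p v) (psub w v)).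
  { intros p Hp. rewrite cross_antisym.
    destruct Hvw as [_ [_ [_ [H|H]]]].
    - specialize (H u Hu). rewrite cross_antisym in H. lra.
    - specialize (H p Hp). lra. }
  apply cone_angle_le; auto.
Qed.

Lemma hull_angle_le (S : list pt) (u v w x y : pt) :
  hull_adjacent S u v -> hull_adjacent S v w -> u <> w -> In x S -> In y S ->
  dot (psub u v) (psub w v) * (norm (psub x v) * norm (psub y v))
   <= dot (psub x v) (psub y v) * (norm (psub u v) * norm (psub w v)).
Proof.
  intros Huv Hvw Huw Hx Hy.
  assert (Hk : cross (psub u v) (psub w v) <> 0).
  { destruct Huv as [Hu [Hv [Huv _]]], Hvw as [_ [Hw [Hvw _]]].
    apply (hull_vertices_not_collinear S); auto. }
  destruct (Rlt_dec 0 (cross (psub u v) (psub w v))).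
  - apply hull_angle_le_pos with S; auto.
  - rewrite dot_comm, (Rmult_comm (norm (psub u v))).
    apply hull_angle_le_pos with S; try apply hull_adjacent_sym; auto.
    rewrite cross_antisym. lra.
Qed.

Lemma Rabs_dot_le (X Y : pt) : Rabs (dot X Y) <= norm X * norm Y.
Proof.
  rewrite norm_mult, <- sqrt_Rsqr_abs. apply sqrt_le_1_alt. unfold Rsqr.
  pose proof (Rle_0_sqr (cross X Y)). unfold Rsqr in *. lra.
Qed.

Lemma norm_pos (X : pt) : X <> (0, 0) -> 0 < norm X.
Proof. intros H. apply sqrt_lt_R0, dot_self_pos, H. Qed.

Lemma acos_gt (z beta : R) : 0 <= beta < PI -> z < cos beta -> beta < acos z.
Proof.
  intros Hb Hz. destruct (Rle_dec z (-1)).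
  - unfold acos. destruct (Rle_dec z (-1)); [lra|contradiction].
  - pose proof (COS_bound beta). pose proof (acos_bound z).
    destruct (Rlt_le_dec beta (acos z)) as [|Hle]; auto. exfalso.
    assert (E : cos (acos z) = z) by (apply cos_acos; lra).
    destruct (Req_dec (acos z) beta) as [Eq|Ne].
    + rewrite Eq in E. lra.
    + assert (cos beta < cos (acos z)) by (apply cos_decreasing_1; lra). lra.
Qed.

Lemma acos_cos_angle_gt (U W X Y : pt) (beta : R) : 0 <= beta < PI ->
  U <> (0, 0) -> W <> (0, 0) ->
  dot U W * (norm X * norm Y) <= dot X Y * (norm U * norm W) ->
  dot X Y < cos beta * (norm X * norm Y) ->
  beta < acos (dot U W / (norm U * norm W)).
Proof.
  intros Hb HU HW Hmono Hwit. apply acos_gt; auto.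
  pose proof (norm_pos U HU). pose proof (norm_pos W HW).
  pose proof (Rabs_dot_le X Y) as Habs.
  assert (HXY : 0 < norm X * norm Y).
  { destruct (Rle_lt_dec (norm X * norm Y) 0); auto. exfalso.
    pose proof (Rabs_pos (dot X Y)). pose proof (Rle_abs (- dot X Y)).
    rewrite Rabs_Ropp in *. pose proof (COS_bound beta). nra. }
  assert (HUW : 0 < norm U * norm W) by (apply Rmult_lt_0_compat; auto).
  apply Rmult_lt_reg_r with (norm U * norm W); auto.
  unfold Rdiv. rewrite Rmult_assoc, Rinv_l, Rmult_1_r by lra.
  apply Rmult_lt_reg_r with (norm X * norm Y); auto.
  nra.
Qed.

Local Notation lerp A B t := (padd A (pscale t (psub B A))).

Lemma cos_norm_lt_of_cross_pos (X Y c s : R) : 0 <= Y -> 0 < s -> c * c + s * s = 1 ->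
  0 < cross (X, Y) (c, s) -> c * norm (X, Y) < X.
Proof.
  unfold cross, norm, dot; simpl. intros HY Hs Hcs Hf.
  set (r := sqrt (X * X + Y * Y)).
  assert (Hr : r * r = X * X + Y * Y) by (apply sqrt_sqrt; nra).
  assert (Hr0 : 0 <= r) by apply sqrt_pos.
  destruct (Rle_dec 0 c).
  - assert (HX : 0 < X) by nra.
    assert ((c * r) * (c * r) < X * X).
    { replace ((c * r) * (c * r)) with (c * c * (X * X + Y * Y)) by (rewrite <- Hr; ring).
      assert (0 <= c * Y) by nra.
      assert ((c * Y) * (c * Y) < (s * X) * (s * X)) by nra. nra. }
    nra.
  - destruct (Rle_dec 0 X).
    + assert (0 < X * X + Y * Y).
      { destruct (Req_dec X 0) as [->|]; [assert (0 < Y) by nra|]; nra. }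
      assert (0 < r) by (apply sqrt_lt_R0; lra). nra.
    + assert ((- X) * (- X) < (c * r) * (c * r)).
      { replace ((c * r) * (c * r)) with (c * c * (X * X + Y * Y)) by (rewrite <- Hr; ring).
        assert (0 <= s * (- X)) by nra.
        assert ((s * (- X)) * (s * (- X)) < ((- c) * Y) * ((- c) * Y)) by nra. nra. }
      assert (- X < - (c * r)) by (apply Rsqr_incrst_0; unfold Rsqr; nra).
      lra.
Qed.

Lemma obtuse_of_cross_pos (v p b : pt) (c s : R) :
  snd p = snd v -> fst p < fst v -> snd v <= snd b -> 0 < s -> c * c + s * s = 1 ->
  0 < cross (psub b v) (c, s) ->
  dot (psub p v) (psub b v) < - c * (norm (psub p v) * norm (psub b v)).
Proof.
  destruct v as [v1 v2], p as [p1 p2], b as [b1 b2]; unfold psub; simpl.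
  intros -> Hp Hb Hs Hcs Hcross.
  pose proof (cos_norm_lt_of_cross_pos (b1 - v1) (b2 - v2) c s ltac:(lra) Hs Hcs Hcross).
  replace (norm (p1 - v1, v2 - v2)) with (v1 - p1).
  - unfold dot; simpl. replace (v2 - v2) with 0 by ring.
    assert (Hd : 0 < v1 - p1) by lra.
    pose proof (Rmult_lt_compat_l _ _ _ Hd H). nra.
  - unfold norm, dot; simpl. rewrite <- (sqrt_square (v1 - p1)) by lra. f_equal. ring.
Qed.

Section StandardPolygon.
Variable n : nat.
Hypothesis n_gt4 : (4 < n)%nat.

Definition half_central_angle : R := PI / INR n.
Local Notation a := half_central_angle.

Lemma INR_n_ge5 : 5 <= INR n.
Proof. replace 5 with (INR 5) by (simpl; lra). apply le_INR. lia. Qed.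

Lemma half_central_angle_bounds : 0 < a <= PI / 5.
Proof.
  pose proof INR_n_ge5. pose proof PI_RGT_0. unfold a, half_central_angle. split.
  - apply Rdiv_lt_0_compat; lra.
  - unfold Rdiv. apply Rmult_le_compat_l; [lra|]. apply Rinv_le_contravar; lra.
Qed.

(* For odd [m], [std_vertex m] are the vertices of a copy of the polygon inscribed in the
   unit circle, with the edge [[std_vertex (-1), std_vertex 1]] horizontal at the bottom. *)
Definition std_vertex (m : R) : pt := (sin (m * a), - cos (m * a)).

Lemma dot_std_vertex (m m' : R) : dot (std_vertex m) (std_vertex m') = cos ((m - m') * a).
Proof.
  unfold dot, std_vertex; simpl. replace ((m - m') * a) with (m * a - m' * a) by ring.
  rewrite cos_minus. ring.
Qed.

Lemma dot_lerp (A B Z : pt) (t : R) : dot (lerp A B t) Z = dot A Z + t * (dot B Z - dot A Z).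
Proof. destruct A, B, Z; unfold dot, padd, pscale, psub; simpl; ring. Qed.

(* Seen from a point [v] of the bottom edge, every point [b] of the next two edges lies
   strictly beyond the line through [v] orthogonal to [std_vertex 3]. *)
Lemma std_obtuse_witness (s s' t : R) (b : pt) :
  0 < s <= 1 -> s' < s -> 0 <= t <= 1 ->
  (b = lerp (std_vertex 1) (std_vertex 3) t /\ (s < 1 \/ 0 < t)) \/
  (b = lerp (std_vertex 3) (std_vertex 5) t /\ (s < 1 \/ t < 1)) ->
  let v := lerp (std_vertex (-1)) (std_vertex 1) s in
  let p := lerp (std_vertex (-1)) (std_vertex 1) s' in
  dot (psub p v) (psub b v) < - cos (3 * a) * (norm (psub p v) * norm (psub b v)).
Proof.
  intros Hs Hs' Ht Hb v p.
  destruct half_central_angle_bounds as [Ha1 Ha2]. pose proof PI_RGT_0 as Hpi.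
  assert (S1 : 0 < sin a) by (apply sin_gt_0; lra).
  assert (C42 : cos (4 * a) < cos (2 * a)) by (apply cos_decreasing_1; lra).
  assert (C2 : cos (2 * a) < 1) by (rewrite <- cos_0; apply cos_decreasing_1; lra).
  assert (C31 : cos (3 * a) <= cos a) by (left; apply cos_decreasing_1; lra).
  assert (C51 : cos (5 * a) <= cos a) by (left; apply cos_decreasing_1; lra).
  assert (Ebot : forall x, lerp (std_vertex (-1)) (std_vertex 1) x
                             = (- sin a + x * (2 * sin a), - cos a)).
  { intros x. unfold std_vertex. replace (-1 * a) with (- a) by ring.
    rewrite Rmult_1_l, sin_neg, cos_neg. unfold padd, pscale, psub; simpl. f_equal; ring. }
  assert (Dv : dot v (std_vertex 3) = cos (4 * a) + s * (cos (2 * a) - cos (4 * a))).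
  { unfold v. rewrite dot_lerp, !dot_std_vertex.
    replace ((-1 - 3) * a) with (- (4 * a)) by ring.
    replace ((1 - 3) * a) with (- (2 * a)) by ring. rewrite !cos_neg. ring. }
  assert (Db : cos (2 * a) < dot b (std_vertex 3) \/
               s < 1 /\ cos (2 * a) <= dot b (std_vertex 3)).
  { destruct Hb as [[-> Hc]|[-> Hc]]; rewrite dot_lerp, !dot_std_vertex;
      replace ((1 - 3) * a) with (- (2 * a)) by ring; replace ((3 - 3) * a) with 0 by ring;
      replace ((5 - 3) * a) with (2 * a) by ring; rewrite ?cos_neg, cos_0;
      destruct Hc; [right; split; [auto|nra] | left; nra | right; split; [auto|nra] | left; nra]. }
  apply obtuse_of_cross_pos with (sin (3 * a)).
  - unfold p, v. rewrite !Ebot. reflexivity.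
  - unfold p, v. rewrite !Ebot. simpl. nra.
  - unfold v. rewrite Ebot. simpl.
    destruct Hb as [[-> _]|[-> _]]; unfold padd, pscale, psub, std_vertex; simpl;
      rewrite ?Rmult_1_l; nra.
  - apply sin_gt_0; lra.
  - pose proof (sin2_cos2 (3 * a)). unfold Rsqr in *. lra.
  - replace (cross (psub b v) (cos (3 * a), sin (3 * a)))
      with (dot b (std_vertex 3) - dot v (std_vertex 3))
      by (destruct b, v; unfold cross, dot, psub, std_vertex; simpl; ring).
    rewrite Dv. destruct Db; nra.
Qed.

End StandardPolygon.

Lemma lerp_flip (A B : pt) (t : R) : lerp A B t = lerp B A (1 - t).
Proof. destruct A, B; unfold padd, pscale, psub; simpl; f_equal; ring. Qed.

Definition two_points_on (S : list pt) (A B : pt) : Prop :=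
  exists x y, x <> y /\ In x S /\ In y S /\ on_segment x A B /\ on_segment y A B.

Lemma on_segment_sym (x A B : pt) : on_segment x A B -> on_segment x B A.
Proof.
  intros [t [Ht ->]]. exists (1 - t). split; [lra|]. apply lerp_flip.
Qed.

Lemma two_points_on_sym (S : list pt) (A B : pt) : two_points_on S A B -> two_points_on S B A.
Proof.
  intros [x [y [Hxy [Hx [Hy [Sx Sy]]]]]].
  exists x, y. repeat split; auto; apply on_segment_sym; auto.
Qed.

Definition similarity (F : pt -> pt) (rho : R) : Prop :=
  (forall y z t, F (lerp y z t) = lerp (F y) (F z) t) /\
  (forall x y z u, dot (psub (F x) (F y)) (psub (F z) (F u))
                   = rho * rho * dot (psub x y) (psub z u)).

Lemma similarity_norm (F : pt -> pt) (rho : R) (x y : pt) : similarity F rho -> 0 < rho ->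
  norm (psub (F x) (F y)) = rho * norm (psub x y).
Proof.
  intros [_ Hd] Hr. unfold norm. rewrite Hd, sqrt_mult_alt, sqrt_square by nra. reflexivity.
Qed.

Lemma similarity_dot_lt (F : pt -> pt) (rho C : R) (p v b : pt) :
  similarity F rho -> 0 < rho ->
  dot (psub p v) (psub b v) < C * (norm (psub p v) * norm (psub b v)) ->
  dot (psub (F p) (F v)) (psub (F b) (F v))
    < C * (norm (psub (F p) (F v)) * norm (psub (F b) (F v))).
Proof.
  intros HF Hr H. rewrite !(similarity_norm F rho) by auto.
  destruct HF as [_ Hd]. rewrite Hd.
  replace (C * (rho * norm (psub p v) * (rho * norm (psub b v))))
    with (rho * rho * (C * (norm (psub p v) * norm (psub b v)))) by ring.
  apply Rmult_lt_compat_l; nra.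
Qed.

Definition rot_sim (c : pt) (rho g : R) (q : pt) : pt :=
  (fst c + rho * (cos g * fst q - sin g * snd q), snd c + rho * (sin g * fst q + cos g * snd q)).

Definition refl_sim (c : pt) (rho g : R) (q : pt) : pt :=
  (fst c + rho * (cos g * fst q + sin g * snd q), snd c + rho * (sin g * fst q - cos g * snd q)).

Lemma rot_sim_similarity (c : pt) (rho g : R) : similarity (rot_sim c rho g) rho.
Proof.
  split.
  - intros [] [] t; unfold rot_sim, padd, pscale, psub; simpl; f_equal; ring.
  - intros [] [] [] []; unfold rot_sim, dot, psub; simpl.
    pose proof (sin2_cos2 g) as E. unfold Rsqr in E.
    transitivity (rho * rho * (sin g * sin g + cos g * cos g)
      * ((r - r1) * (r3 - r5) + (r0 - r2) * (r4 - r6))); [ring|].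
    rewrite E; ring.
Qed.

Lemma refl_sim_similarity (c : pt) (rho g : R) : similarity (refl_sim c rho g) rho.
Proof.
  split.
  - intros [] [] t; unfold refl_sim, padd, pscale, psub; simpl; f_equal; ring.
  - intros [] [] [] []; unfold refl_sim, dot, psub; simpl.
    pose proof (sin2_cos2 g) as E. unfold Rsqr in E.
    transitivity (rho * rho * (sin g * sin g + cos g * cos g)
      * ((r - r1) * (r3 - r5) + (r0 - r2) * (r4 - r6))); [ring|].
    rewrite E; ring.
Qed.

Section RegularPolygon.
Variable n : nat.
Hypothesis n_gt4 : (4 < n)%nat.
Local Notation a := (half_central_angle n).
Local Notation std_vertex := (std_vertex n).

Variables (c : pt) (rho th : R).
Hypothesis rho_pos : 0 < rho.

Definition vertex_at (x : R) : pt :=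
  (fst c + rho * cos (th + 2 * PI * x / INR n), snd c + rho * sin (th + 2 * PI * x / INR n)).

Lemma reg_vertex_at (k : nat) : reg_vertex n c rho th k = vertex_at (INR k).
Proof. reflexivity. Qed.

Lemma vertex_at_ext (x y : R) : x = y -> vertex_at x = vertex_at y.
Proof. intros ->; reflexivity. Qed.

Lemma INR_n_neq0 : INR n <> 0.
Proof. pose proof (INR_n_ge5 n n_gt4). lra. Qed.

Lemma vertex_at_periodic (x : R) : vertex_at (x + INR n) = vertex_at x.
Proof.
  unfold vertex_at. pose proof INR_n_neq0.
  replace (th + 2 * PI * (x + INR n) / INR n) with (th + 2 * PI * x / INR n + 2 * INR 1 * PI)
    by (simpl; field; auto).
  rewrite cos_period, sin_period. reflexivity.
Qed.

Lemma rot_sim_std_vertex (j k : R) :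
  rot_sim c rho (th + (2 * j + 1) * a + PI / 2) (std_vertex (2 * k - 1)) = vertex_at (j + k).
Proof.
  unfold rot_sim, std_vertex, vertex_at, half_central_angle; simpl. pose proof INR_n_neq0.
  set (g := th + (2 * j + 1) * (PI / INR n) + PI / 2).
  replace (th + 2 * PI * (j + k) / INR n) with (g + (2 * k - 1) * (PI / INR n) - PI / 2)
    by (unfold g; field; auto).
  rewrite cos_minus, sin_minus, cos_PI2, sin_PI2, cos_plus, sin_plus. f_equal; f_equal; ring.
Qed.

Lemma refl_sim_std_vertex (j k : R) :
  refl_sim c rho (th + (2 * j + 1) * a - PI / 2) (std_vertex (2 * k - 1))
  = vertex_at (j + 1 - k).
Proof.
  unfold refl_sim, std_vertex, vertex_at, half_central_angle; simpl. pose proof INR_n_neq0.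
  set (g := th + (2 * j + 1) * (PI / INR n) - PI / 2).
  replace (th + 2 * PI * (j + 1 - k) / INR n) with (g - (2 * k - 1) * (PI / INR n) + PI / 2)
    by (unfold g; field; auto).
  rewrite cos_plus, sin_plus, cos_PI2, sin_PI2, cos_minus, sin_minus. f_equal; f_equal; ring.
Qed.

Lemma walk_witness (F : pt -> pt) (A : R -> pt) (S : list pt) (s s' : R) (v p : pt) :
  similarity F rho -> (forall k, F (std_vertex (2 * k - 1)) = A k) ->
  0 < s <= 1 -> s' < s -> v = lerp (A 0) (A 1) s -> p = lerp (A 0) (A 1) s' ->
  two_points_on S (A 1) (A 2) \/ two_points_on S (A 2) (A 3) ->
  exists b, In b S /\
    dot (psub p v) (psub b v) < - cos (3 * a) * (norm (psub p v) * norm (psub b v)).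
Proof.
  intros HF HA Hs Hs' -> -> Htwo.
  assert (HA' : forall m k, m = 2 * k - 1 -> F (std_vertex m) = A k) by (intros m k ->; auto).
  assert (Himg : forall m1 m2 k1 k2 t, m1 = 2 * k1 - 1 -> m2 = 2 * k2 - 1 ->
            lerp (A k1) (A k2) t = F (lerp (std_vertex m1) (std_vertex m2) t)).
  { intros m1 m2 k1 k2 t E1 E2. destruct HF as [Hl _]. rewrite Hl, (HA' m1 k1), (HA' m2 k2); auto. }
  assert (Hwit : forall b t, 0 <= t <= 1 ->
      (b = lerp (A 1) (A 2) t /\ (s < 1 \/ 0 < t)) \/
      (b = lerp (A 2) (A 3) t /\ (s < 1 \/ t < 1)) ->
      dot (psub (lerp (A 0) (A 1) s') (lerp (A 0) (A 1) s))
          (psub b (lerp (A 0) (A 1) s))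
      < - cos (3 * a) * (norm (psub (lerp (A 0) (A 1) s') (lerp (A 0) (A 1) s))
                         * norm (psub b (lerp (A 0) (A 1) s)))).
  { intros b t Ht Hb.
    rewrite !(Himg (-1) 1 0 1) by ring.
    destruct Hb as [[-> Hc]|[-> Hc]];
      [rewrite (Himg 1 3 1 2) by ring | rewrite (Himg 3 5 2 3) by ring];
      apply (similarity_dot_lt F rho); auto; apply std_obtuse_witness with t; auto. }
  destruct Htwo as [[x [y [Hxy [Hx [Hy [[tx [Htx Ex]] [ty [Hty Ey]]]]]]]]
                   |[x [y [Hxy [Hx [Hy [[tx [Htx Ex]] [ty [Hty Ey]]]]]]]]].
  - destruct (Rlt_le_dec 0 tx); [exists x; split; auto; apply (Hwit x tx); auto|].
    destruct (Rlt_le_dec 0 ty); [exists y; split; auto; apply (Hwit y ty); auto|].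
    exfalso. apply Hxy. rewrite Ex, Ey. replace tx with 0 by lra. replace ty with 0 by lra.
    reflexivity.
  - destruct (Rlt_le_dec tx 1); [exists x; split; auto; apply (Hwit x tx); auto|].
    destruct (Rlt_le_dec ty 1); [exists y; split; auto; apply (Hwit y ty); auto|].
    exfalso. apply Hxy. rewrite Ex, Ey. replace tx with 1 by lra. replace ty with 1 by lra.
    reflexivity.
Qed.

Local Notation V k := (reg_vertex n c rho th k).

Lemma reg_vertex_eq (k : nat) (x : R) : INR k = x -> V k = vertex_at x.
Proof. intros <-; reflexivity. Qed.

Lemma reg_vertex_eq_shift (k : nat) (x : R) : INR k = x + INR n -> V k = vertex_at x.
Proof. intros E. rewrite (reg_vertex_eq k _ E). apply vertex_at_periodic. Qed.

Lemma vertex_at_periodic_mul (x : R) (q : nat) : vertex_at (x + INR q * INR n) = vertex_at x.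
Proof.
  induction q as [|q IH]; [simpl; rewrite Rmult_0_l, Rplus_0_r; reflexivity|].
  rewrite S_INR. replace (x + (INR q + 1) * INR n) with (x + INR q * INR n + INR n) by ring.
  rewrite vertex_at_periodic. exact IH.
Qed.

Lemma reg_vertex_mod_add (k i : nat) : V (k mod n + i) = V (k + i).
Proof.
  assert (Hn : n <> 0%nat) by lia.
  rewrite !reg_vertex_at, <- (vertex_at_periodic_mul _ (k / n)). apply vertex_at_ext.
  assert (E : INR k = INR (k mod n) + INR (k / n) * INR n).
  { rewrite (Nat.div_mod k n Hn) at 1. rewrite plus_INR, mult_INR. ring. }
  rewrite !plus_INR, E. ring.
Qed.

Definition two_edge (S : list pt) (k : nat) : Prop := seg_has_exactly_two S (V k) (V (k + 1)).

Lemma two_edge_points (S : list pt) (k : nat) :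
  two_edge S k -> two_points_on S (V k) (V (k + 1)).
Proof. intros [x [y [Hxy [Hx [Hy [Sx [Sy _]]]]]]]. exists x, y. auto. Qed.

Lemma pre_regular_two_edge (S : list pt) :
  (forall k, (k < n)%nat ->
     let v0 := V k in let v1 := V (k + 1) in let v2 := V (k + 2) in
     (seg_has_exactly_two S v0 v1 /\ seg_interior_empty S v1 v2) \/
     (seg_has_exactly_two S v1 v2 /\ seg_interior_empty S v0 v1)) ->
  forall k, two_edge S k \/ two_edge S (k + 1).
Proof.
  intros Hpre k. assert (Hk : (k mod n < n)%nat) by (apply Nat.mod_upper_bound; lia).
  pose proof (reg_vertex_mod_add k 0) as E0. rewrite !Nat.add_0_r in E0.
  unfold two_edge. replace (k + 1 + 1)%nat with (k + 2)%nat by lia.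
  destruct (Hpre _ Hk) as [[H _]|[H _]]; [left|right];
    rewrite ?E0, !reg_vertex_mod_add in H; exact H.
Qed.

Section Witness.
Variable S : list pt.
Hypothesis two_edge_alternate : forall k, two_edge S k \/ two_edge S (k + 1).
Variables (j : nat) (s s' : R) (v p : pt).
Hypothesis v_on_edge : v = lerp (V j) (V (j + 1)) s.
Hypothesis p_on_edge : p = lerp (V j) (V (j + 1)) s'.

Lemma forward_witness : 0 < s <= 1 -> s' < s ->
  exists b, In b S /\
    dot (psub p v) (psub b v) < - cos (3 * a) * (norm (psub p v) * norm (psub b v)).
Proof.
  intros Hs Hs'.
  assert (HV : forall (k : nat) (x : R), INR k = INR j + x -> V k = vertex_at (INR j + x))
    by (intros; apply reg_vertex_eq; auto).
  apply (walk_witness (rot_sim c rho (th + (2 * INR j + 1) * a + PI / 2))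
           (fun k => vertex_at (INR j + k)) S s s');
    auto using rot_sim_similarity, rot_sim_std_vertex.
  - rewrite v_on_edge, (HV j 0), (HV (j + 1)%nat 1); auto; rewrite ?plus_INR; simpl; ring.
  - rewrite p_on_edge, (HV j 0), (HV (j + 1)%nat 1); auto; rewrite ?plus_INR; simpl; ring.
  - rewrite <- (HV (j + 1)%nat 1), <- (HV (j + 1 + 1)%nat 2), <- (HV (j + 1 + 1 + 1)%nat 3)
      by (rewrite ?plus_INR; simpl; ring).
    destruct (two_edge_alternate (j + 1)) as [T|T]; [left|right];
      apply two_edge_points in T; auto.
Qed.

Lemma backward_witness : 0 <= s < 1 -> s < s' ->
  exists b, In b S /\
    dot (psub p v) (psub b v) < - cos (3 * a) * (norm (psub p v) * norm (psub b v)).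
Proof.
  intros Hs Hs'.
  assert (HV : forall (k : nat) (x : R), INR k = INR j + 1 - x -> V k = vertex_at (INR j + 1 - x))
    by (intros; apply reg_vertex_eq; auto).
  assert (HV' : forall (k : nat) (x : R), INR k = INR j + 1 - x + INR n ->
                  V k = vertex_at (INR j + 1 - x))
    by (intros; apply reg_vertex_eq_shift; auto).
  apply (walk_witness (refl_sim c rho (th + (2 * INR j + 1) * a - PI / 2))
           (fun k => vertex_at (INR j + 1 - k)) S (1 - s) (1 - s'));
    auto using refl_sim_similarity, refl_sim_std_vertex; try lra.
  - rewrite v_on_edge, lerp_flip, (HV j 1), (HV (j + 1)%nat 0); auto;
      rewrite ?plus_INR; simpl; ring.
  - rewrite p_on_edge, lerp_flip, (HV j 1), (HV (j + 1)%nat 0); auto;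
      rewrite ?plus_INR; simpl; ring.
  - assert (Hjn : (2 <= j + n)%nat) by lia.
    rewrite <- (HV' (j + n - 2)%nat 3), <- (HV' (j + n - 2 + 1)%nat 2),
      <- (HV' (j + n - 2 + 1 + 1)%nat 1)
      by (rewrite ?plus_INR, ?minus_INR, ?plus_INR by lia; simpl; ring).
    destruct (two_edge_alternate (j + n - 2)) as [T|T]; [right|left];
      apply two_points_on_sym, two_edge_points; auto.
Qed.

End Witness.

Lemma cos_odd_multiple (k : nat) : (1 <= k <= 2 * n - 1)%nat ->
  cos (INR k * a) <= cos a /\ ((1 < k < 2 * n - 1)%nat -> cos (INR k * a) < cos a).
Proof.
  intros Hk. destruct (half_central_angle_bounds n n_gt4) as [H1 H2]. pose proof PI_RGT_0.
  assert (Hna : INR n * a = PI) by (unfold half_central_angle; field; apply INR_n_neq0).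
  assert (E2n : INR (2 * n - 1) = 2 * INR n - 1) by (rewrite minus_INR, mult_INR by lia; simpl; ring).
  assert (Hk1 : 1 <= INR k) by (apply (le_INR 1); lia).
  assert (Hk2 : INR k <= 2 * INR n - 1) by (rewrite <- E2n; apply le_INR; lia).
  assert (Hlt : (1 < k < 2 * n - 1)%nat -> 1 < INR k < 2 * INR n - 1).
  { intros. rewrite <- E2n. split; [apply (lt_INR 1)|apply lt_INR]; lia. }
  destruct (Rle_dec (INR k * a) PI).
  - split.
    + destruct (Req_dec (INR k) 1) as [->|]; [rewrite Rmult_1_l; lra|].
      left; apply cos_decreasing_1; nra.
    + intros Hs. specialize (Hlt Hs). apply cos_decreasing_1; nra.
  - replace (cos (INR k * a)) with (cos (2 * PI - INR k * a))
      by (rewrite cos_minus, cos_2PI, sin_2PI; ring).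
    split.
    + destruct (Req_dec (INR k) (2 * INR n - 1)).
      * replace (2 * PI - INR k * a) with a by nra. lra.
      * left; apply cos_decreasing_1; nra.
    + intros Hs. specialize (Hlt Hs). apply cos_decreasing_1; nra.
Qed.

Lemma cos_edge_start (i j : nat) : (i < n)%nat -> (j < n)%nat -> i <> j ->
  cos ((2 * (INR i - INR j) - 1) * a) <= cos a /\
  (cos ((2 * (INR i - INR j) - 1) * a) = cos a -> (i = S j \/ (i = 0 /\ j = n - 1))%nat).
Proof.
  intros Hi Hj Hij. destruct (Nat.lt_ge_cases j i).
  - replace (2 * (INR i - INR j) - 1) with (INR (2 * (i - j - 1) + 1))
      by (rewrite plus_INR, mult_INR, !minus_INR by lia; simpl; ring).
    destruct (cos_odd_multiple (2 * (i - j - 1) + 1)) as [A B]; [lia|].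
    split; auto. intros E. destruct (Nat.eq_dec i (S j)); [auto|].
    assert (cos (INR (2 * (i - j - 1) + 1) * a) < cos a) by (apply B; lia). lra.
  - replace ((2 * (INR i - INR j) - 1) * a) with (- (INR (2 * (j - i) + 1) * a))
      by (rewrite plus_INR, mult_INR, !minus_INR by lia; simpl; ring).
    rewrite cos_neg. destruct (cos_odd_multiple (2 * (j - i) + 1)) as [A B]; [lia|].
    split; auto. intros E. right.
    destruct (Nat.eq_dec (j - i) (n - 1)); [lia|].
    assert (cos (INR (2 * (j - i) + 1) * a) < cos a) by (apply B; lia). lra.
Qed.

Lemma cos_edge_end (i j : nat) : (i < n)%nat -> (j < n)%nat -> i <> j ->
  cos ((2 * (INR i - INR j) + 1) * a) <= cos a.
Proof.
  intros Hi Hj Hij. destruct (Nat.lt_ge_cases j i).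
  - replace (2 * (INR i - INR j) + 1) with (INR (2 * (i - j - 1) + 3))
      by (rewrite plus_INR, mult_INR, !minus_INR by lia; simpl; ring).
    apply cos_odd_multiple; lia.
  - replace ((2 * (INR i - INR j) + 1) * a) with (- (INR (2 * (j - i - 1) + 1) * a))
      by (rewrite plus_INR, mult_INR, !minus_INR by lia; simpl; ring).
    rewrite cos_neg. apply cos_odd_multiple; lia.
Qed.

Definition edge_normal (m : nat) : pt :=
  (cos (th + (2 * INR m + 1) * a), sin (th + (2 * INR m + 1) * a)).

Lemma dot_edge_normal (i j : nat) (t : R) :
  dot (psub (lerp (V i) (V (i + 1)) t) c) (edge_normal j)
  = rho * ((1 - t) * cos ((2 * (INR i - INR j) - 1) * a)
           + t * cos ((2 * (INR i - INR j) + 1) * a)).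
Proof.
  assert (HV : forall k, dot (psub (V k) c) (edge_normal j)
                         = rho * cos ((2 * (INR k - INR j) - 1) * a)).
  { intros k. unfold reg_vertex, edge_normal, dot, psub, half_central_angle; simpl.
    replace ((2 * (INR k - INR j) - 1) * (PI / INR n))
      with ((th + 2 * PI * INR k / INR n) - (th + (2 * INR j + 1) * (PI / INR n)))
      by (field; apply INR_n_neq0).
    rewrite cos_minus. ring. }
  replace (dot (psub (lerp (V i) (V (i + 1)) t) c) (edge_normal j))
    with ((1 - t) * dot (psub (V i) c) (edge_normal j) + t * dot (psub (V (i + 1)) c) (edge_normal j))
    by (destruct (V i), (V (i + 1)); unfold dot, psub, padd, pscale; simpl; ring).
  rewrite !HV, plus_INR. simpl. replace (2 * (INR i + 1 - INR j) - 1) with (2 * (INR i - INR j) + 1) by ring.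
  ring.
Qed.

Definition half_open_edge (k : nat) (x : pt) : Prop :=
  exists t, 0 <= t < 1 /\ x = lerp (V k) (V (k + 1)) t.

(* Edge [j] lies on the line [dot (x - c) (edge_normal j) = rho cos a], and every other
   edge lies on the inner side of that line, touching it only at [V j] (edge [j - 1])
   or at [V (j + 1)] (edge [j + 1], excluded by half-openness). *)
Lemma half_open_edge_meet (i j : nat) (x : pt) : (i < n)%nat -> (j < n)%nat -> i <> j ->
  half_open_edge i x -> half_open_edge j x -> (i = S j \/ (i = 0 /\ j = n - 1))%nat.
Proof.
  intros Hi Hj Hij [t [Ht Ex]] [t' [Ht' Ex']].
  destruct (cos_edge_start i j Hi Hj Hij) as [A1 A2]. pose proof (cos_edge_end i j Hi Hj Hij).
  apply A2.
  assert (E : (1 - t) * cos ((2 * (INR i - INR j) - 1) * a)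
              + t * cos ((2 * (INR i - INR j) + 1) * a) = cos a).
  { apply Rmult_eq_reg_l with rho; [|lra].
    rewrite <- dot_edge_normal, <- Ex, Ex', dot_edge_normal.
    replace (INR j - INR j) with 0 by ring.
    replace ((2 * 0 - 1) * a) with (- a) by ring. replace ((2 * 0 + 1) * a) with a by ring.
    rewrite cos_neg. ring. }
  nra.
Qed.

Lemma half_open_edges_disjoint (i j : nat) (x : pt) : (i < n)%nat -> (j < n)%nat -> i <> j ->
  half_open_edge i x -> half_open_edge j x -> False.
Proof.
  intros Hi Hj Hij Hxi Hxj.
  pose proof (half_open_edge_meet i j x Hi Hj Hij Hxi Hxj).
  pose proof (half_open_edge_meet j i x Hj Hi (not_eq_sym Hij) Hxj Hxi). lia.
Qed.

Lemma half_open_of_on_segment (k : nat) (x : pt) :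
  on_segment x (V k) (V (k + 1)) -> x <> V (k + 1) -> half_open_edge k x.
Proof.
  intros [t [Ht E]] Hx. exists t. split; auto.
  destruct (Req_dec t 1) as [->|]; [|lra]. exfalso. apply Hx. rewrite E.
  destruct (V k), (V (k + 1)); unfold padd, pscale, psub; simpl; f_equal; ring.
Qed.

Definition prev (k : nat) : nat := if Nat.eqb k 0 then (n - 1)%nat else (k - 1)%nat.

Lemma prev_lt (k : nat) : (k < n)%nat -> (prev k < n)%nat.
Proof. unfold prev. destruct (Nat.eqb_spec k 0); lia. Qed.

Lemma prev_inj (i j : nat) : (i < n)%nat -> (j < n)%nat -> prev i = prev j -> i = j.
Proof. unfold prev. destruct (Nat.eqb_spec i 0), (Nat.eqb_spec j 0); lia. Qed.

Lemma reg_vertex_prev_succ_add (k i : nat) : (k < n)%nat -> V (prev k + 1 + i) = V (k + i).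
Proof.
  intros Hk. unfold prev. destruct (Nat.eqb_spec k 0) as [->|].
  - apply reg_vertex_eq_shift. rewrite !plus_INR, minus_INR by lia. simpl. ring.
  - f_equal. lia.
Qed.

Lemma reg_vertex_prev_succ (k : nat) : (k < n)%nat -> V (prev k + 1) = V k.
Proof.
  intros Hk. pose proof (reg_vertex_prev_succ_add k 0 Hk) as E.
  rewrite !Nat.add_0_r in E. exact E.
Qed.

Lemma two_edge_prev (S : list pt) (k : nat) : (forall k, two_edge S k \/ two_edge S (k + 1)) ->
  (k < n)%nat -> ~ two_edge S k -> two_edge S (prev k).
Proof.
  intros Halt Hk HT. destruct (Halt (prev k)) as [|H]; auto. exfalso. apply HT.
  unfold two_edge in *.
  rewrite reg_vertex_prev_succ, reg_vertex_prev_succ_add in H by auto. exact H.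
Qed.

Section Counting.
Variable S : list pt.
Hypothesis two_edge_alternate : forall k, two_edge S k \/ two_edge S (k + 1).
Variable v : pt.
Hypothesis v_off_two_edges :
  forall j x, (j < n)%nat -> two_edge S j -> on_segment x (V j) (V (j + 1)) -> x <> v.
Variable pq : nat -> pt * pt.
Hypothesis pq_spec : forall k, two_edge S k ->
  fst (pq k) <> snd (pq k) /\ In (fst (pq k)) S /\ In (snd (pq k)) S /\
  on_segment (fst (pq k)) (V k) (V (k + 1)) /\ on_segment (snd (pq k)) (V k) (V (k + 1)).

(* A point of [S] other than [v] charged to edge [k]: one on its half-open edge or, when
   there is none, the second of the two points of the preceding edge. *)
Definition representative (k : nat) (x : pt) : Prop :=
  In x S /\ x <> v /\
  ((half_open_edge k x /\ (two_edge S k -> ~ In (V (k + 1)) S -> x = fst (pq k))) \/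
   (half_open_edge (prev k) x /\ two_edge S (prev k) /\ ~ In (V k) S /\
    x = snd (pq (prev k)))).

Lemma representative_exists (k : nat) : (k < n)%nat -> exists x, representative k x.
Proof.
  intros Hk. destruct (classic (two_edge S k)) as [T|T].
  - destruct (pq_spec k T) as [D [I1 [I2 [S1 S2]]]].
    assert (Hv : forall x, on_segment x (V k) (V (k + 1)) -> x <> v) by eauto.
    destruct (classic (In (V (k + 1)) S)) as [IV|IV].
    + destruct (classic (fst (pq k) = V (k + 1))) as [E|E].
      * exists (snd (pq k)). split; [auto|split; [auto|left]].
        split; [apply half_open_of_on_segment; congruence|]. intros _ F; contradiction.
      * exists (fst (pq k)). split; [auto|split; [auto|left]].
        split; [apply half_open_of_on_segment; auto|auto].
    + exists (fst (pq k)). split; [auto|split; [auto|left]].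
      split; [apply half_open_of_on_segment; auto; intros E; apply IV; rewrite <- E; auto|auto].
  - pose proof (two_edge_prev S k two_edge_alternate Hk T) as Tp.
    assert (Hv : forall x, on_segment x (V (prev k)) (V (prev k + 1)) -> x <> v)
      by (intros; apply (v_off_two_edges (prev k)); auto using prev_lt).
    rewrite reg_vertex_prev_succ in Hv by auto.
    destruct (classic (In (V k) S)) as [IV|IV].
    + exists (V k). split; [auto|split; [apply Hv; exists 1; split; [lra|]|left]].
      * destruct (V (prev k)), (V k); unfold padd, pscale, psub; simpl; f_equal; ring.
      * split; [|intros; contradiction]. exists 0. split; [lra|].
        destruct (V k), (V (k + 1)); unfold padd, pscale, psub; simpl; f_equal; ring.
    + destruct (pq_spec (prev k) Tp) as [D [I1 [I2 [S1 S2]]]].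
      rewrite reg_vertex_prev_succ in S1, S2 by auto.
      exists (snd (pq (prev k))). split; [auto|split; [auto|right]].
      split; [|auto]. apply half_open_of_on_segment; rewrite reg_vertex_prev_succ by auto; auto.
      intros E; apply IV; rewrite <- E; auto.
Qed.

Lemma representative_injective (i j : nat) (x : pt) : (i < n)%nat -> (j < n)%nat ->
  representative i x -> representative j x -> i = j.
Proof.
  intros Hi Hj [_ [_ Ri]] [_ [_ Rj]].
  destruct (Nat.eq_dec i j) as [|Hij]; auto. exfalso.
  assert (Hdisj : forall i' j', (i' < n)%nat -> (j' < n)%nat ->
                   half_open_edge i' x -> half_open_edge j' x -> i' = j').
  { intros i' j' Hi' Hj' H1 H2. destruct (Nat.eq_dec i' j'); auto.
    exfalso; apply (half_open_edges_disjoint i' j' x); auto. }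
  (* the two points charged from one edge to [k] and to [k + 1] are distinct *)
  assert (Hmix : forall k l, (k < n)%nat -> (l < n)%nat ->
     (half_open_edge k x /\ (two_edge S k -> ~ In (V (k + 1)) S -> x = fst (pq k))) ->
     (half_open_edge (prev l) x /\ two_edge S (prev l) /\ ~ In (V l) S /\
      x = snd (pq (prev l))) -> False).
  { intros k l Hk Hl [H1 H2] [H3 [T [H4 H5]]].
    assert (E : k = prev l) by (apply Hdisj; auto using prev_lt). subst k.
    rewrite reg_vertex_prev_succ in H2 by auto.
    destruct (pq_spec (prev l) T) as [D _]. apply D. rewrite <- H2, <- H5; auto. }
  destruct Ri as [Ri|Ri], Rj as [Rj|Rj].
  - apply Hij, Hdisj; [auto|auto|apply Ri|apply Rj].
  - apply (Hmix i j); auto.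
  - apply (Hmix j i); auto.
  - apply Hij, prev_inj; auto. apply Hdisj; auto using prev_lt; [apply Ri|apply Rj].
Qed.

End Counting.

Lemma every_point_on_two_edge (S : list pt) (v : pt) : NoDup S -> length S = n ->
  (forall k, two_edge S k \/ two_edge S (k + 1)) -> In v S ->
  exists j, (j < n)%nat /\ two_edge S j /\ on_segment v (V j) (V (j + 1)).
Proof.
  intros HS HL Halt Hv.
  apply NNPP. intros Hno.
  assert (Hoff : forall j x, (j < n)%nat -> two_edge S j ->
                   on_segment x (V j) (V (j + 1)) -> x <> v)
    by (intros j x Hj T Sx ->; apply Hno; exists j; auto).
  assert (Hpq : forall k, exists z : pt * pt, two_edge S k ->
     fst z <> snd z /\ In (fst z) S /\ In (snd z) S /\
     on_segment (fst z) (V k) (V (k + 1)) /\ on_segment (snd z) (V k) (V (k + 1))).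
  { intros k. destruct (classic (two_edge S k)) as [[x [y [H1 [H2 [H3 [H4 [H5 _]]]]]]]|T].
    - exists (x, y). intros _. simpl. auto.
    - exists (v, v). intros; contradiction. }
  destruct (choice _ Hpq) as [pq Hpq'].
  assert (Hrep : forall k, exists x, (k < n)%nat -> representative S v pq k x).
  { intros k. destruct (Nat.lt_ge_cases k n) as [Hk|Hk].
    - destruct (representative_exists S Halt v Hoff pq Hpq' k Hk) as [x Hx]. eauto.
    - exists v. intros; lia. }
  destruct (choice _ Hrep) as [f Hf].
  assert (ND : NoDup (v :: map f (seq 0 n))).
  { constructor.
    - intros Hin. apply in_map_iff in Hin as [k [Ek Hk]]. apply in_seq in Hk.
      destruct (Hf k ltac:(lia)) as [_ [Ne _]]. auto.
    - apply NoDup_map_NoDup_ForallPairs; [|apply seq_NoDup].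
      intros i j Hi Hj E. apply in_seq in Hi. apply in_seq in Hj.
      apply (representative_injective S v pq Hpq' i j (f i)); try lia.
      + apply Hf; lia.
      + rewrite E. apply Hf; lia. }
  assert (Inc : incl (v :: map f (seq 0 n)) S).
  { intros x [<-|Hx]; auto. apply in_map_iff in Hx as [k [<- Hk]]. apply in_seq in Hk.
    apply Hf; lia. }
  pose proof (NoDup_incl_length ND Inc) as Hlen. simpl in Hlen.
  rewrite length_map, length_seq in Hlen. lia.
Qed.

Lemma far_point_witness (S : list pt) (v : pt) : NoDup S -> length S = n ->
  (forall k, two_edge S k \/ two_edge S (k + 1)) -> In v S ->
  exists p b, In p S /\ In b S /\
    dot (psub p v) (psub b v) < - cos (3 * a) * (norm (psub p v) * norm (psub b v)).
Proof.
  intros HS HL Halt Hv.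
  destruct (every_point_on_two_edge S v HS HL Halt Hv)
    as [j [Hj [[x [y [Hxy [Hx [Hy [Sx [Sy Hex]]]]]]] Sv]]].
  assert (Hpartner : exists p, p <> v /\ In p S /\ on_segment p (V j) (V (j + 1)))
    by (destruct (Hex v Hv Sv) as [-> | ->]; eauto).
  destruct Hpartner as [p [Hpv [Hp [s' [Hs' Ep]]]]], Sv as [s [Hs Ev]].
  exists p. destruct (Rtotal_order s' s) as [Hlt|[->|Hgt]].
  - destruct (forward_witness S Halt j s s' v p Ev Ep) as [b [Hb Hwit]]; [lra|auto|].
    exists b; auto.
  - exfalso. apply Hpv. congruence.
  - destruct (backward_witness S Halt j s s' v p Ev Ep) as [b [Hb Hwit]]; [lra|auto|].
    exists b; auto.
Qed.

End RegularPolygon.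

Theorem lemma5p10 (n : nat) (S : list pt)
  (HS : NoDup S) (Hn : length S = n) (Hn4 : (4 < n)%nat)
  (Hcenter : forall c r, is_SED S c r -> ~ In c S)
  (Hpre : pre_regular n S) :
  forall u v w, hull_adjacent S u v -> hull_adjacent S v w -> u <> w ->
    PI * (INR n - 3) / INR n < angle u v w.
Proof.
  intros u v w Huv Hvw Huw.
  destruct Hpre as [c [rho [th [Hrho Hpre]]]].
  pose proof (pre_regular_two_edge n Hn4 c rho th S Hpre) as Halt.
  assert (Hv : In v S) by apply Huv.
  destruct (far_point_witness n Hn4 c rho th Hrho S v HS Hn Halt Hv) as [p [b [Hp [Hb Hwit]]]].
  destruct (half_central_angle_bounds n Hn4) as [Ha1 Ha2]. pose proof PI_RGT_0 as Hpi.
  replace (PI * (INR n - 3) / INR n) with (PI - 3 * half_central_angle n)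
    by (unfold half_central_angle; field; apply (INR_n_neq0 n Hn4)).
  apply acos_cos_angle_gt with (psub p v) (psub b v).
  - lra.
  - apply psub_neq0. destruct Huv as [_ [_ [H _]]]. auto.
  - apply psub_neq0. destruct Hvw as [_ [_ [H _]]]. auto.
  - apply hull_angle_le with S; auto.
  - rewrite cos_minus, cos_PI, sin_PI. lra.
Qed.
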